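(* For $K>\hat K^*:=\frac{b\sigma_2}{b-\mu_0}$ let $G_4(K)=(S(K),0,I_2(K),0,R(K))$ be the unique equilibrium of the system below with $S,I_2,R>0$. Then $K\mapsto I_2(K)$ is strictly increasing, $K\mapsto S(K)$ is strictly decreasing, and for all $K>\hat K^*$ $$0<I_2(K)<\frac{\mu_4'-\mu_0}{\alpha_2},\qquad \frac{\mu_2-\mu_4'}{\alpha_2}<S(K)<\frac{\mu_2-\mu_0}{\alpha_2}.$$ Moreover, with $R^{**}=\frac{K}{b}(b-\mu_4')$, as $K\to\infty$, $$R(K)=R^{**}+O(1),\qquad I_2(K)=\frac{\mu_4'-\mu_0}{\alpha_2}+O\!\left(\frac1K\right),\qquad S(K)=\frac{\mu_2-\mu_4'}{\alpha_2}+O\!\left(\frac1K\right).$$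
   Context: Consider, for $t\ge0$, the system $S'=\big(b(1-\tfrac{N}{K})-\alpha_1I_1-\alpha_2I_2-(\beta_1+\beta_2+\alpha_3)I_{12}-\mu_0\big)S$, $I_1'=\big(b(1-\tfrac{N}{K})+\alpha_1S-\eta_1I_{12}-\gamma_1I_2-\mu_1\big)I_1+\beta_1SI_{12}$, $I_2'=\big(b(1-\tfrac{N}{K})+\alpha_2S-\eta_2I_{12}-\gamma_2I_1-\mu_2\big)I_2+\beta_2SI_{12}$, $I_{12}'=\big(b(1-\tfrac{N}{K})+\alpha_3S+\eta_1I_1+\eta_2I_2-\mu_3\big)I_{12}+(\gamma_1+\gamma_2)I_1I_2$, $R'=\big(b(1-\tfrac{N}{K})-\mu_4'\big)R+\rho_1I_1+\rho_2I_2+\rho_3I_{12}$, where $N=S+I_1+I_2+I_{12}+R$. All parameters $b,K,\alpha_i,\beta_i,\gamma_i,\eta_i,\rho_i,\mu_0,\mu_i'$ are positive and $\mu_i=\rho_i+\mu_i'$ for $i=1,2,3$; $K$ is regarded as a varying parameter, the others fixed. Standing assumptions: $b>\mu_0$, $b>\mu_i$ ($i=1,2,3$), $b>\mu_4'$, and $\mu_0<\mu_4'<\mu_j'$ for $j=1,2,3$. Set $\sigma_k=(\mu_k-\mu_0)/\alpha_k$ ($k=1,2,3$), assumed to satisfy $\sigma_1<\sigma_2<\sigma_3$, and $S^{**}=\frac{K}{b}(b-\mu_0)$. *)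

From Stdlib Require Import Reals Lra.
Open Scope R_scope.

(* Fixed parameters of the model (K is kept separate as the varying parameter). *)
Record params := Params {
  b : R;
  al1 : R; al2 : R; al3 : R;
  be1 : R; be2 : R;
  ga1 : R; ga2 : R;
  et1 : R; et2 : R;
  rho1 : R; rho2 : R; rho3 : R;
  mu0 : R;
  mu1' : R; mu2' : R; mu3' : R; mu4' : R }.

Definition mu1 (p : params) := rho1 p + mu1' p.
Definition mu2 (p : params) := rho2 p + mu2' p.
Definition mu3 (p : params) := rho3 p + mu3' p.

Definition sigma1 (p : params) := (mu1 p - mu0 p) / al1 p.
Definition sigma2 (p : params) := (mu2 p - mu0 p) / al2 p.
Definition sigma3 (p : params) := (mu3 p - mu0 p) / al3 p.

Definition standing (p : params) : Prop :=
  0 < b p /\ 0 < al1 p /\ 0 < al2 p /\ 0 < al3 p /\ 0 < be1 p /\ 0 < be2 p /\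
  0 < ga1 p /\ 0 < ga2 p /\ 0 < et1 p /\ 0 < et2 p /\
  0 < rho1 p /\ 0 < rho2 p /\ 0 < rho3 p /\ 0 < mu0 p /\
  0 < mu1' p /\ 0 < mu2' p /\ 0 < mu3' p /\ 0 < mu4' p /\
  b p > mu0 p /\ b p > mu1 p /\ b p > mu2 p /\ b p > mu3 p /\ b p > mu4' p /\
  mu0 p < mu4' p /\ mu4' p < mu1' p /\ mu4' p < mu2' p /\ mu4' p < mu3' p /\
  sigma1 p < sigma2 p /\ sigma2 p < sigma3 p.

Definition growth (p : params) (K S I1 I2 I12 Rr : R) : R :=
  b p * (1 - (S + I1 + I2 + I12 + Rr) / K).

Definition fS (p : params) (K S I1 I2 I12 Rr : R) : R :=
  (growth p K S I1 I2 I12 Rr - al1 p * I1 - al2 p * I2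
     - (be1 p + be2 p + al3 p) * I12 - mu0 p) * S.
Definition fI1 (p : params) (K S I1 I2 I12 Rr : R) : R :=
  (growth p K S I1 I2 I12 Rr + al1 p * S - et1 p * I12 - ga1 p * I2 - mu1 p) * I1
  + be1 p * S * I12.
Definition fI2 (p : params) (K S I1 I2 I12 Rr : R) : R :=
  (growth p K S I1 I2 I12 Rr + al2 p * S - et2 p * I12 - ga2 p * I1 - mu2 p) * I2
  + be2 p * S * I12.
Definition fI12 (p : params) (K S I1 I2 I12 Rr : R) : R :=
  (growth p K S I1 I2 I12 Rr + al3 p * S + et1 p * I1 + et2 p * I2 - mu3 p) * I12
  + (ga1 p + ga2 p) * I1 * I2.
Definition fR (p : params) (K S I1 I2 I12 Rr : R) : R :=
  (growth p K S I1 I2 I12 Rr - mu4' p) * Rr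
  + rho1 p * I1 + rho2 p * I2 + rho3 p * I12.

Definition equilibrium (p : params) (K S I1 I2 I12 Rr : R) : Prop :=
  fS p K S I1 I2 I12 Rr = 0 /\ fI1 p K S I1 I2 I12 Rr = 0 /\
  fI2 p K S I1 I2 I12 Rr = 0 /\ fI12 p K S I1 I2 I12 Rr = 0 /\
  fR p K S I1 I2 I12 Rr = 0.

Definition isG4 (p : params) (K S I2 Rr : R) : Prop :=
  0 < S /\ 0 < I2 /\ 0 < Rr /\ equilibrium p K S 0 I2 0 Rr.

Definition Khat (p : params) : R := b p * sigma2 p / (b p - mu0 p).
Definition Rstarstar (p : params) (K : R) : R := K / b p * (b p - mu4' p).

(* At an equilibrium (S,0,I2,0,R) the S-equation fixes the per-capita birth
   rate to mu0 + al2 I2, and the I2-equation then gives S + I2 = sigma2.  The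
   R-equation gives R = rho2 I2 / d with the margin d = mu4' - mu0 - al2 I2 > 0,
   and the growth term forces K (b - mu0 - al2 I2) = b (sigma2 + R).  Everything
   is therefore a function of I2 in (0, (mu4'-mu0)/al2), and the K required by
   I2 is strictly increasing, running from Khat to infinity: this gives
   existence (IVT), uniqueness and monotonicity.  Finally K d (b - mu4') is
   bounded by b (sigma2 d + rho2 I2), so d = O(1/K), which is the asymptotics. *)

From Stdlib Require Import Reals Lra Psatz.
Open Scope R_scope.

Definition I2_limit (p : params) : R := (mu4' p - mu0 p) / al2 p.

Definition G4_margin (p : params) (I2 : R) : R := mu4' p - mu0 p - al2 p * I2.

(* The condition on I2 equivalent to K being the carrying capacity of G_4(K),
   with the denominators of R and of the growth term cleared. *)
Definition G4_residual (p : params) (K I2 : R) : R :=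
  K * (b p - mu0 p - al2 p * I2) * G4_margin p I2
  - b p * (sigma2 p * G4_margin p I2 + rho2 p * I2).

Definition G4_margin_bound (p : params) : R :=
  b p * (sigma2 p + rho2 p / al2 p) * (mu4' p - mu0 p) / (b p - mu4' p).

Definition G4_asymptotic_constant (p : params) : R :=
  G4_margin_bound p / al2 p + G4_margin_bound p / b p + sigma2 p.

Section G4.

Variable p : params.
Hypothesis Hp : standing p.

Lemma G4_parameter_signs :
  0 < al2 p /\ 0 < rho2 p /\ 0 < mu0 p /\ mu0 p < mu4' p /\ mu4' p < mu2 p /\
  mu4' p < b p.
Proof. unfold standing, mu2 in *. lra. Qed.

Lemma al2_sigma2 : al2 p * sigma2 p = mu2 p - mu0 p.
Proof.
  destruct G4_parameter_signs as (Ha & _). unfold sigma2. field. lra.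
Qed.

Lemma Khat_pos : 0 < Khat p.
Proof.
  destruct G4_parameter_signs as (Ha & _ & H0 & H04 & H42 & H4b).
  pose proof al2_sigma2.
  unfold Khat. apply Rdiv_lt_0_compat; [apply Rmult_lt_0_compat|]; nra.
Qed.

Lemma isG4_equations K S I2 Rr : 0 < K -> isG4 p K S I2 Rr ->
  S = sigma2 p - I2 /\
  0 < G4_margin p I2 /\
  G4_margin p I2 * Rr = rho2 p * I2 /\
  K * (b p - mu0 p - al2 p * I2) = b p * (S + I2 + Rr).
Proof.
  intros HK (HS & HI & HR & ES & _ & EI2 & _ & ER).
  destruct G4_parameter_signs as (Ha & Hr2 & _).
  pose proof al2_sigma2.
  unfold fS, fI2, fR, G4_margin in *.
  set (g := growth p K S 0 I2 0 Rr) in *.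
  assert (Hg : K * g = b p * K - b p * (S + I2 + Rr)).
  { unfold g, growth. field. lra. }
  assert (Hrate : g = mu0 p + al2 p * I2).
  { apply Rmult_integral in ES. destruct ES; lra. }
  assert (Hsum : al2 p * S = al2 p * (sigma2 p - I2)).
  { assert (E : (g + al2 p * S - et2 p * 0 - ga2 p * 0 - mu2 p) * I2 = 0) by lra.
    apply Rmult_integral in E. destruct E; lra. }
  split; [apply Rmult_eq_reg_l with (al2 p); lra|].
  split; [nra|].
  split; nra.
Qed.

Lemma isG4_of_residual K I2 : 0 < K -> 0 < I2 -> 0 < G4_margin p I2 ->
  G4_residual p K I2 = 0 ->
  isG4 p K (sigma2 p - I2) I2 (rho2 p * I2 / G4_margin p I2).
Proof.
  intros HK HI Hd Hres.
  destruct G4_parameter_signs as (Ha & Hr2 & H0 & H04 & H42 & H4b).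
  pose proof al2_sigma2.
  unfold G4_residual, G4_margin in *.
  set (d := mu4' p - mu0 p - al2 p * I2) in *.
  assert (Hgr : growth p K (sigma2 p - I2) 0 I2 0 (rho2 p * I2 / d)
                = mu0 p + al2 p * I2).
  { unfold growth. apply Rmult_eq_reg_l with (K * d); [|nra].
    field_simplify; lra. }
  unfold isG4, equilibrium, fS, fI1, fI2, fI12, fR. rewrite Hgr.
  assert (HS : 0 < sigma2 p - I2).
  { apply Rmult_lt_reg_l with (al2 p); [lra|]. unfold d in Hd. lra. }
  split; [exact HS|]. split; [lra|]. split; [apply Rdiv_lt_0_compat; nra|].
  unfold d, mu2 in *. repeat split; [ring | ring | nra | ring | field; lra].
Qed.

Lemma G4_residual_root K : Khat p < K ->
  exists I2, 0 < I2 /\ 0 < G4_margin p I2 /\ G4_residual p K I2 = 0.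
Proof.
  intros HK. pose proof Khat_pos as HK0.
  destruct G4_parameter_signs as (Ha & Hr2 & H0 & H04 & H42 & H4b).
  pose proof al2_sigma2.
  assert (HKb : b p * sigma2 p < K * (b p - mu0 p)).
  { unfold Khat in HK. apply Rmult_lt_compat_r with (r := b p - mu0 p) in HK; [|lra].
    replace (b p * sigma2 p / (b p - mu0 p) * (b p - mu0 p)) with (b p * sigma2 p)
      in HK by (field; lra). lra. }
  assert (Hlim : al2 p * I2_limit p = mu4' p - mu0 p).
  { unfold I2_limit. field. lra. }
  assert (Hlim_pos : 0 < I2_limit p)
    by (unfold I2_limit; apply Rdiv_lt_0_compat; lra).
  assert (Hstart : 0 < G4_residual p K 0).
  { unfold G4_residual, G4_margin. nra. }
  assert (Hend : G4_residual p K (I2_limit p) < 0).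
  { unfold G4_residual, G4_margin.
    replace (mu4' p - mu0 p - al2 p * I2_limit p) with 0 by lra.
    assert (0 < b p * (rho2 p * I2_limit p))
      by (apply Rmult_lt_0_compat; [|apply Rmult_lt_0_compat]; lra).
    lra. }
  destruct (IVT_cor (G4_residual p K) 0 (I2_limit p)) as (I2 & HI2 & Hroot).
  - unfold G4_residual, G4_margin. reg.
  - nra.
  - nra.
  - exists I2. unfold G4_margin in *.
    assert (I2 <> 0) by (intros ->; lra).
    assert (I2 <> I2_limit p) by (intros ->; lra).
    repeat split; [lra|nra|exact Hroot].
Qed.

Lemma isG4_exists K : Khat p < K -> exists S I2 Rr, isG4 p K S I2 Rr.
Proof.
  intros HK. pose proof Khat_pos.
  destruct (G4_residual_root K HK) as (I2 & HI & Hd & Hres).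
  exists (sigma2 p - I2), I2, (rho2 p * I2 / G4_margin p I2).
  apply isG4_of_residual; lra.
Qed.

Lemma isG4_K_lt_of_I2_lt K1 K2 S1 I21 R1 S2 I22 R2 : 0 < K1 -> 0 < K2 ->
  isG4 p K1 S1 I21 R1 -> isG4 p K2 S2 I22 R2 -> I21 < I22 -> K1 < K2.
Proof.
  intros HK1 HK2 H1 H2 HI.
  destruct (isG4_equations _ _ _ _ HK1 H1) as (ES1 & Hd1 & ER1 & EK1).
  destruct (isG4_equations _ _ _ _ HK2 H2) as (ES2 & Hd2 & ER2 & EK2).
  destruct G4_parameter_signs as (Ha & Hr2 & H0 & H04 & H42 & H4b).
  destruct H1 as (_ & HI1 & HR1 & _).
  assert (Hd : G4_margin p I22 < G4_margin p I21) by (unfold G4_margin; nra).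
  assert (HR : R1 < R2).
  { apply Rmult_lt_reg_l with (G4_margin p I22); [lra|].
    assert (G4_margin p I22 * R1 < G4_margin p I21 * R1) by nra.
    nra. }
  assert (Hb : 0 < b p) by lra.
  assert (HN : b p * (S1 + I21 + R1) < b p * (S2 + I22 + R2)).
  { apply Rmult_lt_compat_l; lra. }
  unfold G4_margin in *. nra.
Qed.

Lemma isG4_eq_of_I2_eq K1 K2 S1 R1 S2 R2 I2 : 0 < K1 -> 0 < K2 ->
  isG4 p K1 S1 I2 R1 -> isG4 p K2 S2 I2 R2 -> K1 = K2 /\ S1 = S2 /\ R1 = R2.
Proof.
  intros HK1 HK2 H1 H2.
  destruct (isG4_equations _ _ _ _ HK1 H1) as (ES1 & Hd & ER1 & EK1).
  destruct (isG4_equations _ _ _ _ HK2 H2) as (ES2 & _ & ER2 & EK2).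
  destruct G4_parameter_signs as (Ha & _ & H0 & H04 & _ & H4b).
  unfold G4_margin in *.
  assert (R1 = R2) by (apply Rmult_eq_reg_l with (G4_margin p I2); unfold G4_margin; lra).
  subst. repeat split; auto.
  apply Rmult_eq_reg_r with (b p - mu0 p - al2 p * I2); lra.
Qed.

Lemma isG4_I2_lt_of_K_lt K1 K2 S1 I21 R1 S2 I22 R2 : 0 < K1 -> K1 < K2 ->
  isG4 p K1 S1 I21 R1 -> isG4 p K2 S2 I22 R2 -> I21 < I22.
Proof.
  intros HK1 HK H1 H2.
  destruct (Rtotal_order I21 I22) as [Hlt | [-> | Hgt]]; [exact Hlt | |].
  - destruct (isG4_eq_of_I2_eq _ _ _ _ _ _ _ HK1 (Rlt_trans _ _ _ HK1 HK) H1 H2).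
    lra.
  - pose proof (isG4_K_lt_of_I2_lt _ _ _ _ _ _ _ _ (Rlt_trans _ _ _ HK1 HK) HK1 H2 H1 Hgt).
    lra.
Qed.

Lemma isG4_unique K S1 I21 R1 S2 I22 R2 : 0 < K ->
  isG4 p K S1 I21 R1 -> isG4 p K S2 I22 R2 -> S2 = S1 /\ I22 = I21 /\ R2 = R1.
Proof.
  intros HK H1 H2.
  destruct (Rtotal_order I21 I22) as [Hlt | [<- | Hgt]].
  - pose proof (isG4_K_lt_of_I2_lt _ _ _ _ _ _ _ _ HK HK H1 H2 Hlt). lra.
  - destruct (isG4_eq_of_I2_eq _ _ _ _ _ _ _ HK HK H1 H2) as (_ & -> & ->). auto.
  - pose proof (isG4_K_lt_of_I2_lt _ _ _ _ _ _ _ _ HK HK H2 H1 Hgt). lra.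
Qed.

Lemma isG4_bounds K S I2 Rr : 0 < K -> isG4 p K S I2 Rr ->
  0 < I2 /\ I2 < (mu4' p - mu0 p) / al2 p /\
  (mu2 p - mu4' p) / al2 p < S /\ S < (mu2 p - mu0 p) / al2 p.
Proof.
  intros HK H.
  destruct (isG4_equations _ _ _ _ HK H) as (ES & Hd & _).
  destruct G4_parameter_signs as (Ha & _ & _ & _ & H42 & _).
  destruct H as (_ & HI & _).
  pose proof al2_sigma2.
  assert (al2 p * ((mu4' p - mu0 p) / al2 p) = mu4' p - mu0 p) by (field; lra).
  assert (al2 p * ((mu2 p - mu4' p) / al2 p) = mu2 p - mu4' p) by (field; lra).
  replace ((mu2 p - mu0 p) / al2 p) with (sigma2 p) by reflexivity.
  unfold G4_margin in Hd. subst S.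
  repeat split; nra.
Qed.

Lemma isG4_margin_bound K S I2 Rr : 0 < K -> isG4 p K S I2 Rr ->
  K * G4_margin p I2 <= G4_margin_bound p.
Proof.
  intros HK H.
  destruct (isG4_equations _ _ _ _ HK H) as (ES & Hd & ER & EK).
  destruct G4_parameter_signs as (Ha & Hr2 & H0 & H04 & H42 & H4b).
  pose proof al2_sigma2.
  destruct H as (_ & HI & _).
  unfold G4_margin, G4_margin_bound in *. subst S.
  assert (HaI : 0 < al2 p * I2 < mu4' p - mu0 p) by nra.
  set (d := mu4' p - mu0 p - al2 p * I2) in *.
  assert (Hs : 0 < sigma2 p) by nra.
  assert (Hmass : K * d * (b p - mu4' p + d) = b p * (sigma2 p * d + rho2 p * I2)).
  { replace (b p - mu4' p + d) with (b p - mu0 p - al2 p * I2) by (unfold d; ring).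
    transitivity (d * (K * (b p - mu0 p - al2 p * I2))); [ring|].
    rewrite EK.
    transitivity (b p * (sigma2 p * d + d * Rr)); [ring|].
    rewrite ER. reflexivity. }
  assert (HrI : rho2 p * I2 <= rho2 p / al2 p * (mu4' p - mu0 p)).
  { replace (rho2 p * I2) with (rho2 p / al2 p * (al2 p * I2)) by (field; lra).
    apply Rmult_le_compat_l; [left; apply Rdiv_lt_0_compat|]; lra. }
  apply Rmult_le_reg_r with (b p - mu4' p); [lra|].
  replace (b p * (sigma2 p + rho2 p / al2 p) * (mu4' p - mu0 p) / (b p - mu4' p)
             * (b p - mu4' p))
    with (b p * (sigma2 p * (mu4' p - mu0 p) + rho2 p / al2 p * (mu4' p - mu0 p)))
    by (field; lra).
  assert (0 <= K * d * d) by (apply Rmult_le_pos; nra).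
  assert (sigma2 p * d <= sigma2 p * (mu4' p - mu0 p))
    by (apply Rmult_le_compat_l; unfold d; lra).
  assert (Hb : 0 < b p) by lra.
  apply Rle_trans with (K * d * (b p - mu4' p + d)); [lra|].
  rewrite Hmass. apply Rmult_le_compat_l; lra.
Qed.

Lemma isG4_asymptotics K S I2 Rr : 0 < K -> isG4 p K S I2 Rr ->
  Rabs (Rr - Rstarstar p K) <= G4_asymptotic_constant p /\
  Rabs (I2 - (mu4' p - mu0 p) / al2 p) <= G4_asymptotic_constant p / K /\
  Rabs (S - (mu2 p - mu4' p) / al2 p) <= G4_asymptotic_constant p / K.
Proof.
  intros HK H.
  pose proof (isG4_margin_bound K S I2 Rr HK H) as HM.
  destruct (isG4_equations K S I2 Rr HK H) as (ES & Hd & _ & EK).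
  destruct G4_parameter_signs as (Ha & Hr2 & H0 & H04 & H42 & H4b).
  pose proof al2_sigma2.
  unfold G4_asymptotic_constant, Rstarstar.
  set (M := G4_margin_bound p) in *.
  set (d := G4_margin p I2) in *.
  assert (Hs : 0 < sigma2 p) by nra.
  assert (HKd : 0 < K * d) by nra.
  assert (EI2 : I2 - (mu4' p - mu0 p) / al2 p = - (d / al2 p)).
  { unfold d, G4_margin. field. lra. }
  assert (ES' : S - (mu2 p - mu4' p) / al2 p = d / al2 p).
  { subst S. unfold d, G4_margin. apply Rmult_eq_reg_l with (al2 p); [|lra].
    field_simplify; lra. }
  assert (ER : Rr - K / b p * (b p - mu4' p) = K * d / b p - sigma2 p).
  { subst S. unfold d, G4_margin in *. apply Rmult_eq_reg_l with (b p); [|lra].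
    field_simplify; lra. }
  assert (HdK : d / al2 p <= (M / al2 p + M / b p + sigma2 p) / K).
  { apply Rmult_le_reg_l with K; auto.
    replace (K * ((M / al2 p + M / b p + sigma2 p) / K))
      with (M / al2 p + M / b p + sigma2 p) by (field; lra).
    replace (K * (d / al2 p)) with (K * d / al2 p) by (field; lra).
    assert (K * d / al2 p <= M / al2 p)
      by (apply Rmult_le_compat_r; [left; apply Rinv_0_lt_compat|]; lra).
    assert (0 < M / b p) by (apply Rdiv_lt_0_compat; lra).
    lra. }
  assert (0 < d / al2 p) by (apply Rdiv_lt_0_compat; lra).
  rewrite EI2, ES', ER.
  assert (0 < K * d / b p <= M / b p).
  { split; [apply Rdiv_lt_0_compat; lra|].
    apply Rmult_le_compat_r; [left; apply Rinv_0_lt_compat|]; lra. }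
  assert (0 < M / al2 p) by (apply Rdiv_lt_0_compat; lra).
  split; [|split]; apply Rabs_le; lra.
Qed.

End G4.

Theorem mainTheorem15 (p : params) (Hp : standing p) :
  (forall K, Khat p < K ->
     exists S I2 Rr, isG4 p K S I2 Rr /\
       forall S' I2' Rr', isG4 p K S' I2' Rr' -> S' = S /\ I2' = I2 /\ Rr' = Rr) /\
  (forall K1 K2 S1 I21 R1 S2 I22 R2,
     Khat p < K1 -> K1 < K2 ->
     isG4 p K1 S1 I21 R1 -> isG4 p K2 S2 I22 R2 ->
     I21 < I22 /\ S2 < S1) /\
  (forall K S I2 Rr, Khat p < K -> isG4 p K S I2 Rr ->
     0 < I2 /\ I2 < (mu4' p - mu0 p) / al2 p /\
     (mu2 p - mu4' p) / al2 p < S /\ S < (mu2 p - mu0 p) / al2 p) /\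
  (exists C K0, forall K S I2 Rr, K0 < K -> Khat p < K -> isG4 p K S I2 Rr ->
     Rabs (Rr - Rstarstar p K) <= C /\
     Rabs (I2 - (mu4' p - mu0 p) / al2 p) <= C / K /\
     Rabs (S - (mu2 p - mu4' p) / al2 p) <= C / K).
Proof.
  pose proof (Khat_pos p Hp) as HK0.
  split; [|split; [|split]].
  - intros K HK.
    destruct (isG4_exists p Hp K HK) as (S & I2 & Rr & H).
    exists S, I2, Rr. split; [exact H|].
    intros S' I2' Rr' H'. apply (isG4_unique p Hp K); [lra|exact H|exact H'].
  - intros K1 K2 S1 I21 R1 S2 I22 R2 HK1 HK H1 H2.
    assert (HK1' : 0 < K1) by lra. assert (HK2 : 0 < K2) by lra.
    pose proof (isG4_I2_lt_of_K_lt p Hp _ _ _ _ _ _ _ _ HK1' HK H1 H2).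
    destruct (isG4_equations p Hp _ _ _ _ HK1' H1) as (-> & _).
    destruct (isG4_equations p Hp _ _ _ _ HK2 H2) as (-> & _).
    split; lra.
  - intros K S I2 Rr HK. apply isG4_bounds; [exact Hp|lra].
  - exists (G4_asymptotic_constant p), 0.
    intros K S I2 Rr _ HK H.
    apply isG4_asymptotics; [exact Hp|lra|exact H].
Qed.
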